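(* Let $(X,d)$ be a compact metric space, $\mathbb{F}=\{f_n:n\in\mathbb{N}\}$ a commutative family of continuous bijective self-maps of $X$, and let $\mathbb{G}$ be a finite rearrangement of $\mathbb{F}$. Then for $x,y\in X$, $(x,y)$ is proximal for $(X,\mathbb{F})$ if and only if $(x,y)$ is proximal for $(X,\mathbb{G})$.
   Context: For a family $\mathbb{H}=\{h_n\}$ write $\omega_n=h_n\circ\cdots\circ h_1$; a pair $(x,y)$ is proximal for $(X,\mathbb{H})$ if $\liminf_{n\to\infty}d(\omega_n(x),\omega_n(y))=0$. $\mathbb{F}$ is commutative if $f_i\circ f_j=f_j\circ f_i$ for all $i,j$. $\mathbb{G}=\{g_n\}$ is a finite rearrangement of $\mathbb{F}$ if $g_n=f_{\pi(n)}$ for a bijection $\pi:\mathbb{N}\to\mathbb{N}$ fixing all but finitely many $n$. *)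

From Stdlib Require Import Reals List.
Open Scope R_scope.

Record is_metric (X : Type) (d : X -> X -> R) : Prop := {
  metric_nonneg : forall x y, 0 <= d x y;
  metric_eq0 : forall x y, d x y = 0 <-> x = y;
  metric_sym : forall x y, d x y = d y x;
  metric_triangle : forall x y z, d x z <= d x y + d y z
}.

Definition m_open {X : Type} (d : X -> X -> R) (U : X -> Prop) : Prop :=
  forall x, U x -> exists e, 0 < e /\ forall y, d x y < e -> U y.

Definition m_compact {X : Type} (d : X -> X -> R) : Prop :=
  forall (I : Type) (U : I -> X -> Prop),
    (forall i, m_open d (U i)) ->
    (forall x, exists i, U i x) ->
    exists l : list I, forall x, exists i, In i l /\ U i x.

Definition m_continuous {X : Type} (d : X -> X -> R) (f : X -> X) : Prop :=
  forall x e, 0 < e -> exists dl, 0 < dl /\ forall y, d x y < dl -> d (f x) (f y) < e.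

Definition bijective_map {X : Type} (f : X -> X) : Prop :=
  exists g : X -> X, (forall x, g (f x) = x) /\ (forall y, f (g y) = y).

(* omega h n = h_n o ... o h_1 ; families indexed by positive naturals,
   with h : nat -> X -> X and h_k := h k for k >= 1 (h 0 unused). *)
Fixpoint omega {X : Type} (h : nat -> X -> X) (n : nat) (x : X) : X :=
  match n with
  | O => x
  | S m => h (S m) (omega h m x)
  end.

(* liminf_{n->oo} d(omega_n x, omega_n y) = 0  (d >= 0) *)
Definition proximal {X : Type} (d : X -> X -> R) (h : nat -> X -> X) (x y : X) : Prop :=
  forall e, 0 < e -> forall N, exists n, (N <= n)%nat /\ d (omega h n x) (omega h n y) < e.

Definition commutative_family {X : Type} (f : nat -> X -> X) : Prop :=
  forall i j, (1 <= i)%nat -> (1 <= j)%nat -> forall x, f i (f j x) = f j (f i x).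

Definition finite_rearrangement {X : Type} (f g : nat -> X -> X) : Prop :=
  exists pi : nat -> nat,
    (forall n, (1 <= n)%nat -> (1 <= pi n)%nat) /\
    (forall m n, (1 <= m)%nat -> (1 <= n)%nat -> pi m = pi n -> m = n) /\
    (forall m, (1 <= m)%nat -> exists n, (1 <= n)%nat /\ pi n = m) /\
    (exists K, forall n, (K <= n)%nat -> pi n = n) /\
    (forall n, (1 <= n)%nat -> g n = f (pi n)).

From Stdlib Require Import Reals List Permutation Lia.
Open Scope R_scope.

(* For n past the last index moved by the rearrangement, g_1, ..., g_n is a
   reordering of f_1, ..., f_n, so commutativity gives omega g n = omega f n.
   Proximality only depends on the tail of the orbit, hence agrees for F and G. *)

Lemma omega_fold_right {X : Type} (h : nat -> X -> X) (n : nat) (x : X) :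
  omega h n x = fold_right h x (rev (seq 1 n)).
Proof.
  induction n as [|n IHn]; [reflexivity|].
  rewrite seq_S, rev_app_distr; simpl. now rewrite IHn.
Qed.

Lemma fold_right_map_index {A B X : Type} (f : B -> X -> X) (g : A -> X -> X)
    (pi : A -> B) (l : list A) (x : X) :
  (forall i, In i l -> g i = f (pi i)) ->
  fold_right g x l = fold_right f x (map pi l).
Proof.
  induction l as [|i l IHl]; intros Hg; simpl; [reflexivity|].
  rewrite Hg by now left. f_equal.
  apply IHl. intros j Hj. apply Hg. now right.
Qed.

Lemma fold_right_Permutation_comm {A X : Type} (P : A -> Prop) (h : A -> X -> X)
    (l l' : list A) (x : X) :
  (forall i j, P i -> P j -> forall z, h i (h j z) = h j (h i z)) ->
  Permutation l l' -> Forall P l ->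
  fold_right h x l = fold_right h x l'.
Proof.
  intros Hcomm Hperm. revert x.
  induction Hperm as [|i l l' _ IH|i j l|l l' l'' H1 IH1 _ IH2]; intros x HP; simpl.
  - reflexivity.
  - inversion HP; subst. now rewrite IH.
  - inversion HP as [|? ? Hj HP']; inversion HP'; subst. now apply Hcomm.
  - rewrite IH1 by assumption. apply IH2. now apply (Permutation_Forall H1).
Qed.

Lemma Permutation_map_seq_eventually_id (pi : nat -> nat) (K n : nat) :
  (forall i, (1 <= i)%nat -> (1 <= pi i)%nat) ->
  (forall i j, (1 <= i)%nat -> (1 <= j)%nat -> pi i = pi j -> i = j) ->
  (forall i, (K <= i)%nat -> pi i = i) ->
  (K <= n)%nat ->
  Permutation (map pi (seq 1 n)) (seq 1 n).
Proof.
  intros Hpos Hinj Hfix HKn.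
  apply Permutation_map_same_l.
  - apply FinFun.Injective_map_NoDup_in; [|apply seq_NoDup].
    intros i j Hi Hj. apply in_seq in Hi, Hj. apply Hinj; lia.
  - intros j Hj. apply in_map_iff in Hj as (i & <- & Hi). apply in_seq in Hi.
    apply in_seq. split; [apply Hpos; lia|].
    destruct (Nat.le_gt_cases (pi i) n) as [Hle|Hgt]; [lia|].
    (* pi fixes pi i > n >= K, so injectivity forces pi i = i <= n. *)
    assert (pi i = i) by (apply Hinj; [apply Hpos; lia | lia | apply Hfix; lia]).
    lia.
Qed.

Lemma omega_rearrangement_eventually_eq {X : Type} (f g : nat -> X -> X) :
  commutative_family f -> finite_rearrangement f g ->
  exists K, forall n x, (K <= n)%nat -> omega g n x = omega f n x.
Proof.
  intros Hcomm (pi & Hpos & Hinj & _ & (K & Hfix) & Hg).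
  exists K. intros n x HKn. rewrite !omega_fold_right.
  rewrite (fold_right_map_index f g pi)
    by (intros i Hi; apply in_rev, in_seq in Hi; apply Hg; lia).
  apply (fold_right_Permutation_comm (fun i => (1 <= i)%nat)); [exact Hcomm| |].
  - rewrite map_rev. apply Permutation_rev'.
    now apply (Permutation_map_seq_eventually_id pi K).
  - apply Forall_forall. intros j Hj.
    apply in_map_iff in Hj as (i & <- & Hi). apply in_rev, in_seq in Hi.
    apply Hpos; lia.
Qed.

Lemma proximal_eventually_eq {X : Type} (d : X -> X -> R) (f g : nat -> X -> X)
    (K : nat) (x y : X) :
  (forall n z, (K <= n)%nat -> omega g n z = omega f n z) ->
  proximal d f x y -> proximal d g x y.
Proof.
  intros Heq Hprox e He N.
  destruct (Hprox e He (Nat.max N K)) as (n & Hn & Hd).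
  exists n. split; [lia|]. now rewrite !Heq by lia.
Qed.

Theorem mainTheorem10 (X : Type) (d : X -> X -> R) (f g : nat -> X -> X)
  (hd : is_metric X d) (hc : m_compact d)
  (hcont : forall n, (1 <= n)%nat -> m_continuous d (f n))
  (hbij : forall n, (1 <= n)%nat -> bijective_map (f n))
  (hcomm : commutative_family f)
  (hrearr : finite_rearrangement f g) :
  forall x y : X, proximal d f x y <-> proximal d g x y.
Proof.
  destruct (omega_rearrangement_eventually_eq f g hcomm hrearr) as (K & Heq).
  intros x y. split; apply (proximal_eventually_eq d _ _ K).
  - exact Heq.
  - intros n z HKn. symmetry. now apply Heq.
Qed.
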